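(* Let $m\geq 0$ and $k\geq 1$ be integers and let $n$ be a nonnegative integer with $n\geq t(m,k)$, where \[ t(m,k)= m\left(\left\lfloor \frac{m}{k}\right\rfloor +1\right)k-\binom{\lfloor m/k\rfloor +1}{2}k^2 . \] Then $b(n,k)\geq m$.
   Context: For a cell $u$ of the Young diagram of a partition $\lambda$, the hook length of $u$ is the number of cells $v$ of the diagram with $v=u$, or $v$ below $u$ in the same column, or $v$ to the right of $u$ in the same row. $\alpha_k(\lambda)$ is the number of cells of the Young diagram of $\lambda$ with hook length exactly $k$. $P(n)$ is the set of partitions of $n$ (with $P(0)$ containing only the empty partition), and $b(n,k)=\max\{\alpha_k(\lambda)\colon\lambda\in P(n)\}$. *)

From mathcomp Require Import all_boot.
Set Implicit Arguments. Unset Strict Implicit. Unset Printing Implicit Defensive.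

(* A partition is represented by its list of parts (rows of the Young diagram,
   top to bottom), weakly decreasing and all positive. *)
Definition is_partition (n : nat) (la : seq nat) : bool :=
  [&& sorted geq la, all (fun x => 0 < x) la & sumn la == n].

Definition conj_part (la : seq nat) (j : nat) : nat := count (fun x => j < x) la.

(* hook length of cell (i, j) (0-indexed row i, column j, with j < la_i):
   arm (cells to the right) + leg (cells below) + 1 *)
Definition hook (la : seq nat) (i j : nat) : nat :=
  (nth 0 la i - j.+1) + (conj_part la j - i.+1) + 1.

Definition alpha (k : nat) (la : seq nat) : nat :=
  \sum_(i < size la) \sum_(j < nth 0 la i) (hook la i j == k).

(* Finite encoding of P(n): a function f : 'I_n -> 'I_(n.+1) whose values,
   read in order, are weakly decreasing and sum to n; the partition is the
   list of nonzero values.  Every partition of n has at most n parts, each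
   at most n, so this enumerates exactly P(n). *)
Definition part_of (n : nat) (f : {ffun 'I_n -> 'I_n.+1}) : seq nat :=
  [seq x <- [seq nat_of_ord (f i) | i <- enum 'I_n] | 0 < x].

Definition enc_ok (n : nat) (f : {ffun 'I_n -> 'I_n.+1}) : bool :=
  is_partition n (part_of f) &&
  sorted geq [seq nat_of_ord (f i) | i <- enum 'I_n].

Definition b (n k : nat) : nat :=
  \max_(f : {ffun 'I_n -> 'I_n.+1} | enc_ok f) alpha k (part_of f).

Definition t (m k : nat) : nat :=
  m * (m %/ k).+1 * k - 'C((m %/ k).+1, 2) * k ^ 2.

From mathcomp Require Import all_boot zify.
Set Implicit Arguments. Unset Strict Implicit. Unset Printing Implicit Defensive.

(* Write m = q k + r with r < k.  Shifting a partition k columns to the right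
   and putting a k x k square below it keeps every old hook and adds the k
   cells of hook k on the anti-diagonal of the square; doing this q times to a
   base partition of r rows of width k, which has r cells of hook k, gives m
   such cells in exactly t(m,k) cells, and any excess e is absorbed by
   widening the base rows.  When k divides m the base would be empty, so one
   square is replaced by a base with k cells of hook k; if moreover 0 < e < k
   the excess cannot be spread over full rows, and each square is replaced by
   a block whose first row overhangs by e, stacked on a final row of length e. *)

Definition alpha_row (k : nat) (la : seq nat) (i : nat) : nat :=
  \sum_(j < nth 0 la i) (hook la i j == k).

Lemma alpha_rowsE k la : alpha k la = \sum_(i < size la) alpha_row k la i.
Proof. by []. Qed.

Lemma alpha_row_gt0 k la i j :
  j < nth 0 la i -> hook la i j = k -> 0 < alpha_row k la i.
Proof. by move=> lt_j hook_ij; rewrite /alpha_row (bigD1 (Ordinal lt_j)) //= hook_ij eqxx. Qed.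

Lemma hook_cons_succ x la i j : all (fun y => y <= x) la -> j < nth 0 la i ->
  hook (x :: la) i.+1 j = hook la i j.
Proof.
move=> le_la_x lt_j.
have lt_i : i < size la by rewrite ltnNge; apply: contraL lt_j => /(nth_default 0) ->.
have lt_jx : j < x by apply: leq_trans lt_j (allP le_la_x _ (mem_nth 0 lt_i)).
by rewrite /hook /conj_part /= lt_jx add1n subSS.
Qed.

Lemma hook_cons0 x la j : j < x -> hook (x :: la) 0 j = x - j + conj_part la j.
Proof. by move=> lt_jx; rewrite /hook /conj_part /= lt_jx; lia. Qed.

Lemma alpha_cons k x la : all (fun y => y <= x) la ->
  alpha k (x :: la) = alpha_row k (x :: la) 0 + alpha k la.
Proof.
move=> le_la_x; rewrite !alpha_rowsE /= big_ord_recl; congr (_ + _).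
by apply: eq_bigr => i _; apply: eq_bigr => j _; rewrite hook_cons_succ.
Qed.

Lemma alpha_cons_ltn k x la j : all (fun y => y <= x) la -> j < x ->
  x - j + conj_part la j = k -> alpha k la < alpha k (x :: la).
Proof.
move=> le_la_x lt_jx hook_j; rewrite alpha_cons // -add1n leq_add2r.
by apply: (@alpha_row_gt0 _ _ _ j) => //; rewrite hook_cons0.
Qed.

Definition glue (a : nat) (top bot : seq nat) : seq nat := map (addn a) top ++ bot.

(* Cells of [top] keep their hooks when [bot] reproduces, [a] columns further
   right, the column heights of the [tail] that sat below [top]; cells of [bot]
   keep theirs because every row of the shifted [top] covers them. *)
Lemma alpha_glue k a top tail bot :
  (forall j, conj_part bot (j + a) = conj_part tail j) ->
  (forall x y, x \in top -> y \in bot -> y <= a + x) ->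
  \sum_(i < size top) alpha_row k (top ++ tail) i + alpha k bot
    <= alpha k (glue a top bot).
Proof.
move=> conj_bot le_bot_top.
rewrite [alpha k (glue _ _ _)]alpha_rowsE size_cat size_map big_split_ord /=.
apply: leq_add.
  apply: leq_sum => i _; have lt_i := ltn_ord i.
  have nthE : nth 0 (glue a top bot) i = a + nth 0 (top ++ tail) i.
    by rewrite !nth_cat size_map lt_i (nth_map 0).
  rewrite /alpha_row nthE big_split_ord /= -[X in X <= _]add0n leq_add //.
  apply: eq_leq; apply: eq_bigr => -[j _] _ /=.
  congr (_ == k); rewrite /hook nthE /conj_part /glue !count_cat count_map.
  have -> : count (fun x => a + j < x) bot = count (fun x => j < x) tail.
    by have := conj_bot j; rewrite /conj_part addnC.
  have -> : count (preim (addn a) (fun x => a + j < x)) top = count (fun x => j < x) top.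
    by apply: eq_count => y /=; rewrite ltn_add2l.
  by rewrite -addnS subnDl.
apply: eq_leq; apply: eq_bigr => -[p lt_p] _ /=.
have nthE : nth 0 (glue a top bot) (size top + p) = nth 0 bot p.
  by rewrite nth_cat size_map ltnNge leq_addr /= addKn.
rewrite /alpha_row /= nthE; apply: eq_bigr => -[j lt_j] _ /=.
congr (_ == k); rewrite /hook nthE /conj_part /glue count_cat count_map.
have -> : count (preim (addn a) (fun x => j < x)) top = size top.
  rewrite -count_predT; apply: eq_in_count => y y_top /=.
  by apply: leq_trans lt_j (le_bot_top _ _ y_top (mem_nth 0 lt_p)).
by rewrite -addnS subnDl.
Qed.

Lemma size_glue a top bot : size (glue a top bot) = size top + size bot.
Proof. by rewrite size_cat size_map. Qed.

Lemma sumn_glue a top bot :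
  sumn (glue a top bot) = a * size top + sumn top + sumn bot.
Proof. by rewrite sumn_cat; elim: top => [|x top IH] /=; lia. Qed.

Lemma pairwise_geq_cat (l1 l2 : seq nat) : pairwise geq l1 -> pairwise geq l2 ->
  (forall x y, x \in l1 -> y \in l2 -> y <= x) -> pairwise geq (l1 ++ l2).
Proof.
move=> sorted1 sorted2 le21; rewrite pairwise_cat sorted1 sorted2 !andbT.
by apply/allrelP => x y; apply: le21.
Qed.

Lemma pairwise_geq_nseq n x : pairwise geq (nseq n x).
Proof. by elim: n => //= n ->; rewrite andbT all_nseq /= leqnn orbT. Qed.

Lemma pairwise_glue a top bot : pairwise geq top -> pairwise geq bot ->
  (forall x y, x \in top -> y \in bot -> y <= a + x) -> pairwise geq (glue a top bot).
Proof.
move=> sorted_top sorted_bot le_bot_top; apply: pairwise_geq_cat => //.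
  by rewrite pairwise_map; apply: sub_pairwise sorted_top => x y /=; rewrite leq_add2l.
by move=> _ y /mapP [x x_top ->]; apply: le_bot_top.
Qed.

Definition stack (k : nat) (blk : seq nat) (q : nat) (l : seq nat) : seq nat :=
  iter q (fun top => glue k top blk) l.

Section Stack.

Variables (k c : nat) (blk : seq nat).
Hypotheses (size_blk : size blk = k) (sumn_blk : sumn blk = k * k).
Hypotheses (blk_sorted : pairwise geq blk)
  (blk_bounds : all (fun y => c <= y <= k + c) blk).

Lemma size_stack q l : size (stack k blk q l) = size l + q * k.
Proof. by elim: q => [|q IH] /=; rewrite ?size_glue ?IH ?size_blk; lia. Qed.

Lemma sumn_stack q l :
  sumn (stack k blk q l) = sumn l + q * k * size l + k * k * 'C(q.+1, 2).
Proof.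
elim: q => [|q IH]; first by rewrite bin_small //=; lia.
rewrite [LHS]sumn_glue -/(stack k blk q l) size_stack IH sumn_blk.
rewrite [in RHS]binS bin1; nia.
Qed.

Lemma stack_ge q l :
  all (fun x => c <= x) l -> all (fun x => c <= x) (stack k blk q l).
Proof.
move=> ge_l; elim: q => [|q IH] //=; rewrite all_cat all_map.
apply/andP; split; first by apply: sub_all IH => x /=; lia.
by apply: sub_all blk_bounds => y /andP [].
Qed.

Lemma pairwise_stack q l : pairwise geq l -> all (fun x => c <= x) l ->
  pairwise geq (stack k blk q l).
Proof.
move=> sorted_l ge_l; elim: q => [|q IH] //=; apply: pairwise_glue => // x y x_top y_blk.
have := allP (stack_ge q ge_l) x x_top; have := allP blk_bounds y y_blk.
simpl; lia.
Qed.

(* [tail] is a short row left below the stack: [blk] must overhang the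
   previous stage exactly as [tail] does, and [tail] itself has no hook [k]. *)
Lemma alpha_stack tail q l :
  (forall j, conj_part (blk ++ tail) (j + k) = conj_part tail j) ->
  k <= alpha k (blk ++ tail) ->
  all (fun y => y <= k + c) tail ->
  (forall top, alpha k (top ++ tail) = \sum_(i < size top) alpha_row k (top ++ tail) i) ->
  all (fun x => c <= x) l ->
  alpha k (l ++ tail) + q * k <= alpha k (stack k blk q l ++ tail).
Proof.
move=> conj_blk alpha_blk le_tail tail_silent ge_l.
elim: q => [|q IH]; first by rewrite addn0.
rewrite /= -/(stack k blk q l) /glue -catA -/(glue k _ (blk ++ tail)).
apply: leq_trans (@alpha_glue k k _ tail _ conj_blk _).
  by rewrite -tail_silent mulSn; lia.
move=> x y x_top; have := allP (stack_ge q ge_l) x x_top => /= ge_x.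
rewrite mem_cat => /orP [/(allP blk_bounds) | /(allP le_tail)] /=; lia.
Qed.

End Stack.

Lemma alpha_rect k w s : k <= w -> s <= k -> s <= alpha k (nseq s w).
Proof.
move=> le_kw; elim: s => [|s IH] le_sk //=.
apply: leq_trans (@alpha_cons_ltn _ _ _ (w + s - k) _ _ _).
- by have := IH (ltnW le_sk); lia.
- by rewrite all_nseq leqnn orbT.
- lia.
by rewrite /conj_part count_nseq /=; lia.
Qed.

Lemma alpha_near_rect k w p s : k <= w -> p + s < k ->
  p + s <= alpha k (nseq p w.+1 ++ nseq s w).
Proof.
move=> le_kw; elim: p => [|p IH] lt_k /=; first by apply: alpha_rect; lia.
apply: leq_trans (@alpha_cons_ltn _ _ _ (w.+1 + p + s - k) _ _ _).
- by have := IH (ltnW lt_k); lia.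
- by rewrite all_cat !all_nseq /= leqnn ltnW ?orbT.
- lia.
by rewrite /conj_part count_cat !count_nseq /=; lia.
Qed.

Lemma alpha_hook_rect k e : 0 < k -> e = 0 \/ k <= e ->
  k <= alpha k ((k + e) :: nseq k.-1 k).
Proof.
move=> k_gt0 e_cases.
have alpha_low : k.-1 <= alpha k (nseq k.-1 k) by apply: alpha_rect; lia.
case: e_cases => [-> | le_ke].
  apply: leq_trans (@alpha_cons_ltn _ _ _ k.-1 _ _ _).
  - lia.
  - by rewrite all_nseq leq_addr orbT.
  - lia.
  by rewrite /conj_part count_nseq /=; lia.
apply: leq_trans (@alpha_cons_ltn _ _ _ e _ _ _).
- lia.
- by rewrite all_nseq leq_addr orbT.
- lia.
by rewrite /conj_part count_nseq /=; lia.
Qed.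

(* A block of [k] rows and [k ^ 2] cells whose first row overhangs the
   others by exactly [e]: stacked on a row [e], it reproduces that row's
   overhang for the next stage. *)
Definition fblock (k e : nat) : seq nat :=
  (k + e) :: nseq (k.-1 - e) k ++ nseq e k.-1.

Section FBlock.

Variables (k e : nat).
Hypotheses (e_gt0 : 0 < e) (lt_ek : e < k).

Lemma size_fblock : size (fblock k e) = k.
Proof. by rewrite /= size_cat !size_nseq; lia. Qed.

Lemma sumn_fblock : sumn (fblock k e) = k * k.
Proof.
rewrite /= sumn_cat !sumn_nseq.
have [f ->] : exists f, k = e + f.+1 by exists (k - e).-1; lia.
have -> : (e + f.+1).-1 = e + f by lia.
by rewrite addKn; nia.
Qed.

Lemma fblock_bounds : all (fun y => e <= y <= k + e) (fblock k e).
Proof. by rewrite /= all_cat !all_nseq /= leq_addl /=; apply/and3P; split; lia. Qed.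

Lemma fblock_sorted : pairwise geq (fblock k e).
Proof.
rewrite /fblock -cat1s; apply: pairwise_geq_cat => //=.
- apply: pairwise_geq_cat; rewrite ?pairwise_geq_nseq // => x y.
  by rewrite !mem_nseq => /andP [_ /eqP ->] /andP [_ /eqP ->]; lia.
- move=> _ y /[!inE] /eqP ->; rewrite mem_cat !mem_nseq.
  by case/orP => /andP [_ /eqP ->]; lia.
Qed.

Lemma alpha_fblock_bottom p : p <= e -> p <= alpha k (nseq p k.-1 ++ [:: e]).
Proof.
elim: p => [|p IH] le_pe //=.
apply: leq_trans (@alpha_cons_ltn _ _ _ p _ _ _).
- by have := IH (ltnW le_pe); lia.
- by rewrite all_cat all_nseq leqnn orbT /=; lia.
- lia.
by rewrite /conj_part count_cat count_nseq /=; lia.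
Qed.

Lemma alpha_fblock_middle p : p <= k.-1 - e ->
  e + p <= alpha k (nseq p k ++ nseq e k.-1 ++ [:: e]).
Proof.
elim: p => [|p IH] le_p /=; first by rewrite addn0 alpha_fblock_bottom.
apply: leq_trans (@alpha_cons_ltn _ _ _ (p + e) _ _ _).
- by have := IH (ltnW le_p); lia.
- by rewrite !all_cat !all_nseq /= leqnn leq_pred /=; lia.
- lia.
by rewrite /conj_part !count_cat !count_nseq /=; lia.
Qed.

Lemma alpha_fblock : k <= alpha k (fblock k e ++ [:: e]).
Proof.
have alpha_rest := @alpha_fblock_middle (k.-1 - e) (leqnn _).
rewrite /fblock cat_cons -catA.
apply: leq_trans (@alpha_cons_ltn _ _ _ k.-1 _ _ _).
- lia.
- by rewrite !all_cat !all_nseq /= leq_addr /=; apply/andP; split; lia.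
- lia.
by rewrite /conj_part !count_cat !count_nseq /=; lia.
Qed.

Lemma conj_fblock j : conj_part (fblock k e ++ [:: e]) (j + k) = conj_part [:: e] j.
Proof. by rewrite /conj_part /= !count_cat !count_nseq /=; lia. Qed.

End FBlock.

Lemma alpha_cat_short_row k e top : e < k ->
  alpha k (top ++ [:: e]) = \sum_(i < size top) alpha_row k (top ++ [:: e]) i.
Proof.
move=> lt_ek; rewrite alpha_rowsE size_cat addn1 big_ord_recr /=.
rewrite -[RHS]addn0; congr (_ + _); apply: big1 => -[j lt_j] _ /=.
have nthE : nth 0 (top ++ [:: e]) (size top) = e by rewrite nth_cat ltnn subnn.
have : conj_part (top ++ [:: e]) j <= (size top).+1.
  by apply: leq_trans (count_size _ _) _; rewrite size_cat addn1.
by move: lt_j; rewrite /hook nthE => lt_j le_conj; apply/eqP; lia.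
Qed.

Lemma sorted_geqE (s : seq nat) : sorted geq s = pairwise geq s.
Proof. by rewrite sorted_pairwise //; apply: rev_trans leq_trans. Qed.

Lemma size_le_sumn (s : seq nat) : all (fun x => 0 < x) s -> size s <= sumn s.
Proof. by elim: s => //= x s IH /andP [x_gt0 /IH]; lia. Qed.

Lemma nth_le_sumn (s : seq nat) i : nth 0 s i <= sumn s.
Proof.
elim: s i => [|x s IH] [|i] //=; first exact: leq_addr.
exact: leq_trans (IH i) (leq_addl _ _).
Qed.

(* [la], padded with zeros, is the graph of a valid encoding in [P(n)]. *)
Lemma alpha_le_b k n la : pairwise geq la -> all (fun x => 0 < x) la ->
  sumn la = n -> alpha k la <= b n k.
Proof.
move=> sorted_la pos_la sum_la.
have le_size : size la <= n by rewrite -sum_la size_le_sumn.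
pose f : {ffun 'I_n -> 'I_n.+1} := [ffun i : 'I_n => inord (nth 0 la i)].
have graphE : [seq nat_of_ord (f i) | i <- enum 'I_n] = la ++ nseq (n - size la) 0.
  transitivity [seq nth 0 la i | i <- iota 0 n].
    rewrite -val_enum_ord -map_comp; apply: eq_map => i /=.
    by rewrite ffunE inordK // ltnS; apply: leq_trans (nth_le_sumn la i) _; rewrite sum_la.
  have nth_pad r p : size la <= p -> [seq nth 0 la i | i <- iota p r] = nseq r 0.
    by elim: r p => //= r IH p le_p; rewrite nth_default // IH // ltnW.
  rewrite -(subnKC le_size) iotaD map_cat map_nth_iota0 // take_size add0n addKn.
  by rewrite nth_pad.
have part_f : part_of f = la.
  by rewrite /part_of graphE filter_cat (all_filterP pos_la) filter_nseq cats0.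
have ok_f : enc_ok f.
  rewrite /enc_ok part_f /is_partition sum_la eqxx pos_la graphE !sorted_geqE sorted_la.
  apply: pairwise_geq_cat; rewrite ?pairwise_geq_nseq // => x y _.
  by rewrite mem_nseq => /andP [_ /eqP ->].
by rewrite -part_f; apply: (leq_bigmax_cond f ok_f).
Qed.

Lemma b_ge_square_stack k q l : 0 < k -> pairwise geq l -> all (fun x => k <= x) l ->
  alpha k l + q * k <= b (sumn l + q * k * size l + k * k * 'C(q.+1, 2)) k.
Proof.
move=> k_gt0 sorted_l ge_l.
have sq_bounds : all (fun y => k <= y <= k + k) (nseq k k).
  by rewrite all_nseq leqnn leq_addr orbT.
have sumn_sq : sumn (nseq k k) = k * k by rewrite sumn_nseq.
have size_sq := size_nseq k k; have sorted_sq := pairwise_geq_nseq k k.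
apply: leq_trans (alpha_le_b k _ _ (sumn_stack size_sq sumn_sq sorted_sq sq_bounds q l)).
- have := alpha_stack size_sq sumn_sq sorted_sq sq_bounds (tail := [::]) q (l := l).
  rewrite !cats0; apply=> //.
  - by move=> j; rewrite /conj_part count_nseq /=; lia.
  - exact: alpha_rect.
  - by move=> top; rewrite cats0.
- by have := pairwise_stack size_sq sumn_sq sorted_sq sq_bounds q sorted_l; apply.
- have /(_ _ ge_l) := stack_ge size_sq sumn_sq sorted_sq sq_bounds q.
  by apply: sub_all => x /=; lia.
Qed.

(* Write [e = c * r + d] with [d < r]: the base is [r] rows of width [k + c],
   the first [d] of them one cell longer. *)
Lemma b_ge_mod k q r e : 0 < r < k ->
  q * k + r <= b (k * k * 'C(q.+1, 2) + r * q.+1 * k + e) k.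
Proof.
case/andP=> r_gt0 lt_rk; have k_gt0 : 0 < k by lia.
have [c [d [lt_dr ->]]] : exists c d, d < r /\ e = c * r + d.
  by exists (e %/ r), (e %% r); rewrite ltn_pmod // -divn_eq.
have alpha_base : r <= alpha k (nseq d (k + c).+1 ++ nseq (r - d) (k + c)).
  by rewrite -{1}(subnKC (ltnW lt_dr)); apply: alpha_near_rect; lia.
have sorted_base : pairwise geq (nseq d (k + c).+1 ++ nseq (r - d) (k + c)).
  apply: pairwise_geq_cat; rewrite ?pairwise_geq_nseq // => x y.
  by rewrite !mem_nseq => /andP [_ /eqP ->] /andP [_ /eqP ->].
have ge_base : all (fun x => k <= x) (nseq d (k + c).+1 ++ nseq (r - d) (k + c)).
  by rewrite all_cat !all_nseq; apply/andP; split; apply/orP; right; lia.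
have := b_ge_square_stack q k_gt0 sorted_base ge_base.
rewrite sumn_cat size_cat !sumn_nseq !size_nseq subnKC ?(ltnW lt_dr) //.
have -> : (k + c).+1 * d + (k + c) * (r - d) + q * k * r + k * k * 'C(q.+1, 2)
          = k * k * 'C(q.+1, 2) + r * q.+1 * k + (c * r + d).
  have [s ->] : exists s, r = d + s by exists (r - d); lia.
  rewrite addKn; nia.
by apply: leq_trans; rewrite addnC leq_add2r.
Qed.

Lemma b_ge_dvd k q e : 0 < k -> e = 0 \/ k <= e ->
  q.+1 * k <= b (k * k * 'C(q.+2, 2) + e) k.
Proof.
move=> k_gt0 e_cases.
have sorted_base : pairwise geq ((k + e) :: nseq k.-1 k).
  rewrite -cat1s; apply: pairwise_geq_cat; rewrite ?pairwise_geq_nseq // => x y.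
  by rewrite inE mem_nseq => /eqP -> /andP [_ /eqP ->]; apply: leq_addr.
have ge_base : all (fun x => k <= x) ((k + e) :: nseq k.-1 k).
  by rewrite /= all_nseq leq_addr leqnn orbT.
have := b_ge_square_stack q k_gt0 sorted_base ge_base.
rewrite /= sumn_nseq size_nseq (prednK k_gt0).
have -> : k + e + k * k.-1 + q * k * k + k * k * 'C(q.+1, 2) = k * k * 'C(q.+2, 2) + e.
  have [k' ->] : exists k', k = k'.+1 by exists k.-1; lia.
  rewrite [in RHS]binS bin1; nia.
by apply: leq_trans; rewrite mulSn leq_add2r alpha_hook_rect.
Qed.

Lemma b_ge_dvd_small k q e : 0 < e < k -> q * k <= b (k * k * 'C(q.+1, 2) + e) k.
Proof.
case/andP=> e_gt0 lt_ek; have k_gt0 : 0 < k by lia.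
have size_fb := size_fblock e_gt0 lt_ek; have sumn_fb := sumn_fblock e_gt0 lt_ek.
have sorted_fb := fblock_sorted e_gt0 lt_ek; have bounds_fb := fblock_bounds e_gt0 lt_ek.
have ge_nil : all (fun x => e <= x) [::] by [].
have alpha_la : q * k <= alpha k (stack k (fblock k e) q [::] ++ [:: e]).
  have := alpha_stack size_fb sumn_fb sorted_fb bounds_fb q (conj_fblock e_gt0 lt_ek)
    (alpha_fblock e_gt0 lt_ek) _ (fun top => alpha_cat_short_row top lt_ek) ge_nil.
  by rewrite /= leq_addl => /(_ isT); apply: leq_trans; rewrite leq_addl.
apply: leq_trans alpha_la (alpha_le_b k _ _ _).
- apply: pairwise_geq_cat => //.
    exact: (pairwise_stack size_fb sumn_fb sorted_fb bounds_fb q).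
  move=> x _ x_la /[!inE] /eqP ->.
  exact: allP (stack_ge size_fb sumn_fb sorted_fb bounds_fb q ge_nil) x x_la.
- rewrite all_cat /= e_gt0 !andbT.
  by apply: sub_all _ (stack_ge size_fb sumn_fb sorted_fb bounds_fb q ge_nil) => x /=; lia.
- by rewrite sumn_cat (sumn_stack size_fb sumn_fb sorted_fb bounds_fb) /= muln0 !addn0 add0n.
Qed.

Lemma bin2S_mul2 q : 'C(q.+1, 2) * 2 = q.+1 * q.
Proof. by elim: q => [|q IH] //; rewrite binS bin1 mulnDl IH; lia. Qed.

Lemma t_divE m k :
  t m k = k * k * 'C((m %/ k).+1, 2) + m %% k * (m %/ k).+1 * k.
Proof.
rewrite /t; have := bin2S_mul2 (m %/ k); have := divn_eq m k.
move: (m %/ k) (m %% k) => q r ->; move: 'C(q.+1, 2) => c c_mul2.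
nia.
Qed.

Theorem theorem4p2 (m k n : nat) (hk : 1 <= k) (hn : t m k <= n) : m <= b n k.
Proof.
have [e ->] : exists e, n = t m k + e by exists (n - t m k); lia.
rewrite t_divE {1}(divn_eq m k).
move: (m %/ k) (m %% k) (ltn_pmod m hk) => q r lt_rk.
have [-> | r_gt0] := posnP r; last by apply: b_ge_mod; rewrite r_gt0.
case: q => [|q]; first by rewrite mul0n.
rewrite !mul0n !addn0.
have [e_small | e_large] : 0 < e < k \/ e = 0 \/ k <= e by lia.
- exact: b_ge_dvd_small.
- exact: b_ge_dvd.
Qed.
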